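(* Let $G\le\mathrm{Aut}(\mathcal{T}_d)$ be a persistent, finite-state self-similar group. If the Röver–Nekrashevych group $V_d(G)$ is finitely generated, then so is $G$.
   Context: Let $X=\{1,\dots,d\}$ ($d\ge2$) with its usual order; $X^*$ is the vertex set of the rooted $d$-ary tree $\mathcal{T}_d$, ordered lexicographically. Every $f\in\mathrm{Aut}(\mathcal{T}_d)$ has a wreath recursion $f=\rho(f)(f_1,\dots,f_d)$ with $\rho(f)\in S_d$, $f_i$ determined by $f(iw)=\rho(f)(i)f_i(w)$; the states of $f$ form the smallest set containing $f$ and closed under $f\mapsto f_i$. $G$ is self-similar if it contains all states of its elements; finite-state if each element has finitely many states; persistent if there is $i$ such that $g_i=g$ for every $g\in G$. With $X^\omega$ the infinite words, for finite complete rooted subtrees $T_-,T_+$ with $n$ leaves $u_1,\dots,u_n$, $v_1,\dots,v_n$ (lexicographic order), $\sigma\in S_n$, $g_i\in G$, $[T_-,\sigma(g_1,\dots,g_n),T_+]$ is the homeomorphism of $X^\omega$ with $v_iw\mapsto u_{\sigma(i)}g_i(w)$; $V_d(G)$ is the group of all these. *)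

From mathcomp Require Import all_boot all_fingroup.
Set Implicit Arguments. Unset Strict Implicit. Unset Printing Implicit Defensive.

(* Alphabet X = {1,...,d} is modelled by 'I_d (its usual order = order of 'I_d).
   Finite words X^* : seq 'I_d.   Infinite words X^omega : nat -> 'I_d. *)

Definition word d := seq 'I_d.
Definition iword d := nat -> 'I_d.
Definition tmap d := word d -> word d.

Definition is_aut d (f : tmap d) : Prop :=
  bijective f /\ (forall w, size (f w) = size w) /\
  (forall w n, f (take n w) = take n (f w)).

(* Section (state) of f at vertex v:  f (v w) = f(v) f_v(w). *)
Definition section d (f : tmap d) (v : word d) : tmap d :=
  fun w => drop (size v) (f (v ++ w)).

Definition is_subgroup_aut d (G : tmap d -> Prop) : Prop :=
  (forall g, G g -> is_aut g) /\ G id /\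
  (forall g h, G g -> G h -> G (g \o h)) /\
  (forall g, G g -> exists h, [/\ G h, cancel g h & cancel h g]).

Definition finite_state d (f : tmap d) : Prop :=
  exists (n : nat) (st : nat -> tmap d),
    forall v : word d, exists k, k < n /\ forall w, section f v w = st k w.

Definition self_similar d (G : tmap d -> Prop) : Prop :=
  forall g v, G g -> G (section g v).

Definition finite_state_group d (G : tmap d -> Prop) : Prop :=
  forall g, G g -> finite_state g.

Definition persistent d (G : tmap d -> Prop) : Prop :=
  exists i : 'I_d, forall g, G g -> forall w, section g [:: i] w = g w.

(* Leaves (in lexicographic order) of a finite complete rooted subtree:
   start from the root and repeatedly replace a leaf v by its d children
   v1,...,vd (this keeps the leaves lexicographically sorted). *)
Inductive leafset d : seq (word d) -> Prop :=
| leafset_root : leafset [:: [::]]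
| leafset_expand L1 v L2 : leafset (L1 ++ v :: L2) ->
    leafset (L1 ++ [seq rcons v x | x <- enum 'I_d] ++ L2).

Definition icat d (v : word d) (w : iword d) : iword d :=
  fun k => if k < size v then nth (w k) v k else w (k - size v).

Definition iact d (g : tmap d) (w : iword d) : iword d :=
  fun k => nth (w k) (g (mkseq w k.+1)) k.

(* The Roever-Nekrashevych group V_d(G): all maps [T_-, sigma(g_1..g_n), T_+]
   sending v_i w to u_{sigma(i)} g_i(w). *)
Definition in_V d (G : tmap d -> Prop) (F : iword d -> iword d) : Prop :=
  exists (n : nat) (U Vs : seq (word d)) (sigma : 'S_n) (gs : 'I_n -> tmap d),
    leafset U /\ leafset Vs /\ size U = n /\ size Vs = n /\
        (forall i, G (gs i)) /\
        forall (i : 'I_n) (w : iword d),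
          F (icat (nth [::] Vs i) w) = icat (nth [::] U (sigma i)) (iact (gs i) w).

Inductive gen (A : Type) (n : nat) (s : nat -> A -> A) : (A -> A) -> Prop :=
| gen_id : gen n s id
| gen_mul k g : k < n -> gen n s g -> gen n s (s k \o g)
| gen_inv k h g : k < n -> cancel (s k) h -> cancel h (s k) ->
    gen n s g -> gen n s (h \o g).

Definition fin_gen (A : Type) (H : (A -> A) -> Prop) : Prop :=
  exists (n : nat) (s : nat -> A -> A),
    (forall k, k < n -> H (s k)) /\
    forall f, H f -> exists f', gen n s f' /\ forall x, f' x = f x.

From mathcomp Require Import all_boot all_fingroup.
From Stdlib Require Import FunctionalExtensionality Classical.
From Stdlib Require List.
Set Implicit Arguments. Unset Strict Implicit. Unset Printing Implicit Defensive.

(* Each generator of V_d(G) acts, near every point of X^omega, as a prefix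
   replacement p |-> u followed by an element of G.  As G is finite-state, the
   states of the finitely many elements involved form a finite set closed under
   sections; it generates a self-similar subgroup H of G.  Maps acting locally
   as a prefix replacement followed by an element of H are closed under
   composition and inversion, so every element of V_d(G) is of this kind.
   Apply this to g in G near a^omega, a the persistent letter: there
   g (p z) = g(p) g(z) = u h(z) for all z, and since d >= 2 the prefixes must
   have equal length, whence g = h lies in H. *)

Section InfiniteWords.

Variable d : nat.
Implicit Types (v w : word d) (x z : iword d).

Lemma mkseq_icat v z m : mkseq (icat v z) m = take m v ++ mkseq z (m - size v).
Proof.
apply: (@eq_from_nth _ (z 0)).
  rewrite size_mkseq size_cat size_take size_mkseq.
  by case: ltnP => h; [rewrite (eqP (ltnW h)) addn0 | rewrite subnKC].
move=> k; rewrite size_mkseq => km.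
rewrite nth_mkseq // /icat nth_cat size_take.
case: (ltnP m (size v)) => hm.
  rewrite km nth_take // (ltn_trans km hm); apply: set_nth_default; exact: ltn_trans hm.
case: ltnP => kv.
  by rewrite nth_take //; apply: set_nth_default.
by rewrite nth_mkseq // ltn_sub2rE.
Qed.

Lemma iword_eq_mkseq x z K : (forall m, K <= m -> mkseq x m = mkseq z m) -> x = z.
Proof.
move=> E; apply: functional_extensionality => k.
have := congr1 (fun s => nth (x k) s k) (E (maxn K k.+1) (leq_maxl _ _)).
by rewrite !nth_mkseq // leq_max ltnSn orbT.
Qed.

Lemma icat0 z : icat [::] z = z.
Proof. by apply: (@iword_eq_mkseq _ _ 0) => m _; rewrite mkseq_icat subn0. Qed.

Lemma icatI v : injective (icat v).
Proof.
move=> x z E; apply: functional_extensionality => k.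
by have := congr1 (fun y => y (k + size v)) E; rewrite /icat ltnNge leq_addl addnK.
Qed.

Lemma icat_cat v w z : icat v (icat w z) = icat (v ++ w) z.
Proof.
apply: (@iword_eq_mkseq _ _ (size (v ++ w))) => m hm.
rewrite !mkseq_icat size_cat in hm *.
have hv : size v <= m by apply: leq_trans hm; rewrite leq_addr.
have hw : size w <= m - size v by rewrite leq_subRL.
by rewrite (take_oversize hv) (take_oversize hw) take_oversize ?size_cat // catA subnDA.
Qed.

Lemma icat_mkseq_shift z k : icat (mkseq z k) (fun j => z (j + k)) = z.
Proof.
apply: functional_extensionality => j; rewrite /icat size_mkseq.
by case: ltnP => h; [rewrite nth_mkseq | rewrite subnK].
Qed.

Lemma icat_prefix v w x z :
  icat v x = icat w z -> size w <= size v -> v = w ++ mkseq z (size v - size w).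
Proof.
move=> E h; have := congr1 (fun y => mkseq y (size v)) E.
by rewrite /= !mkseq_icat subnn cats0 !take_oversize.
Qed.

Lemma const_icat_nseq (a : 'I_d) v z : (fun _ => a) = icat v z -> v = nseq (size v) a.
Proof.
move=> E; have := congr1 (fun y => mkseq y (size v)) E.
rewrite /= mkseq_icat take_oversize // subnn cats0 => <-.
by apply: (@eq_from_nth _ a); rewrite ?size_mkseq ?size_nseq // => k hk;
  rewrite nth_mkseq // nth_nseq hk.
Qed.

End InfiniteWords.

Section TreeMaps.

Variable d : nat.
Implicit Types (f g h : tmap d) (u v w : word d) (z : iword d).

Definition is_tree_map f :=
  (forall w, size (f w) = size w) /\ (forall w n, f (take n w) = take n (f w)).

Lemma aut_tree_map f : is_aut f -> is_tree_map f.
Proof. by case. Qed.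

Lemma tree_map_cat f v w : is_tree_map f -> f (v ++ w) = f v ++ section f v w.
Proof.
move=> [_ f_take]; rewrite /section.
by rewrite -{2}(take_size_cat w (erefl (size v))) f_take cat_take_drop.
Qed.

Lemma tree_map_section f v : is_tree_map f -> is_tree_map (section f v).
Proof.
move=> [f_size f_take]; split=> [w|w n]; rewrite /section.
  by rewrite size_drop f_size size_cat addKn.
have -> : v ++ take n w = take (size v + n) (v ++ w).
  by rewrite take_cat ltnNge leq_addr /= addKn.
by rewrite f_take take_drop addnC.
Qed.

Lemma tree_map_comp f g : is_tree_map f -> is_tree_map g -> is_tree_map (f \o g).
Proof.
move=> [f_size f_take] [g_size g_take]; split=> [w|w n] /=.
  by rewrite f_size g_size.
by rewrite g_take f_take.
Qed.

Lemma tree_map_inv f g : is_tree_map f -> cancel f g -> cancel g f -> is_tree_map g.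
Proof.
move=> [f_size f_take] fK gK; split=> [w|w n]; first by rewrite -f_size gK.
by apply: (can_inj fK); rewrite gK f_take gK.
Qed.

Lemma section_nil f : section f [::] = f.
Proof. by apply: functional_extensionality => w; rewrite /section drop0. Qed.

Lemma section_id v : section (@id (word d)) v = id.
Proof. by apply: functional_extensionality => w; rewrite /section drop_size_cat. Qed.

Lemma section_section f v w : section (section f v) w = section f (v ++ w).
Proof.
apply: functional_extensionality => u.
by rewrite /section drop_drop size_cat addnC catA.
Qed.

Lemma section_nseq f (a : 'I_d) k : section f [:: a] = f -> section f (nseq k a) = f.
Proof.
move=> fa; elim: k => [|k IHk]; first exact: section_nil.
by rewrite -[nseq _ _]/([:: a] ++ nseq k a) -section_section fa.
Qed.

Lemma section_comp f g v : is_tree_map f -> is_tree_map g ->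
  section (f \o g) v = section f (g v) \o section g v.
Proof.
move=> tf tg; apply: functional_extensionality => w.
rewrite {1}/section /= (tree_map_cat _ _ tg) (tree_map_cat _ _ tf) drop_size_cat //.
by case: tf => f_size _; case: tg => g_size _; rewrite f_size g_size.
Qed.

Lemma section_inv f g u : is_tree_map f -> cancel f g -> cancel g f ->
  cancel (section f (g u)) (section g u) /\ cancel (section g u) (section f (g u)).
Proof.
move=> tf fK gK; have tg := tree_map_inv tf fK gK.
split=> w.
  have : g u ++ section g u (section f (g u) w) = g u ++ w.
    by rewrite -(tree_map_cat _ _ tg) -{1}[u]gK -(tree_map_cat _ _ tf) fK.
  by move/eqP; rewrite eqseq_cat // eqxx => /eqP ->.
have : f (g u) ++ section f (g u) (section g u w) = f (g u) ++ w.
  by rewrite -(tree_map_cat _ _ tf) -(tree_map_cat _ _ tg) !gK.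
by move/eqP; rewrite eqseq_cat // eqxx => /eqP ->.
Qed.

Lemma mkseq_iact g z m : is_tree_map g -> mkseq (iact g z) m = g (mkseq z m).
Proof.
move=> [g_size g_take]; apply: (@eq_from_nth _ (z 0)).
  by rewrite g_size !size_mkseq.
move=> k; rewrite size_mkseq => km; rewrite nth_mkseq // /iact.
have -> : mkseq z k.+1 = take k.+1 (mkseq z m).
  apply: (@eq_from_nth _ (z 0)); first by rewrite size_takel ?size_mkseq.
  move=> j; rewrite size_mkseq => jk; rewrite nth_take // !nth_mkseq //.
  exact: leq_trans km.
by rewrite g_take nth_take //; apply: set_nth_default; rewrite g_size size_mkseq.
Qed.

Lemma iact_id z : iact id z = z.
Proof. by apply: (@iword_eq_mkseq _ _ _ 0) => m _; rewrite mkseq_iact. Qed.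

Lemma iact_comp f g z : is_tree_map f -> is_tree_map g ->
  iact f (iact g z) = iact (f \o g) z.
Proof.
move=> tf tg; apply: (@iword_eq_mkseq _ _ _ 0) => m _.
by rewrite !mkseq_iact //; apply: tree_map_comp.
Qed.

Lemma iact_icat g v z : is_tree_map g ->
  iact g (icat v z) = icat (g v) (iact (section g v) z).
Proof.
move=> tg; have [g_size _] := tg.
apply: (@iword_eq_mkseq _ _ _ (size v)) => m hm.
rewrite mkseq_iact // !mkseq_icat mkseq_iact; last exact: tree_map_section.
by rewrite g_size !take_oversize ?g_size // tree_map_cat.
Qed.

Lemma iact_inj f g : is_tree_map f -> is_tree_map g ->
  (forall z, iact f z = iact g z) -> f = g.
Proof.
move=> tf tg fg; apply: functional_extensionality => -[|a w].
  have [[f_size _] [g_size _]] := (tf, tg).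
  by rewrite (size0nil (f_size [::])) (size0nil (g_size [::])).
have := congr1 (fun y => mkseq y (size (a :: w))) (fg (nth a (a :: w))).
by rewrite !mkseq_iact // mkseq_nth.
Qed.

Lemma icat_iact_shift_trivial u v g h : is_tree_map g -> injective g ->
  (forall z, icat u (iact g z) = icat v (iact h z)) -> size u < size v ->
  forall a b : 'I_d, a = b.
Proof.
move=> tg g_inj E uv.
have head_g : forall z, u ++ g [:: z 0] = take (size u).+1 v.
  move=> z; have := congr1 (fun y => mkseq y (size u).+1) (E z).
  rewrite /= !mkseq_icat take_oversize // subSn // subnn mkseq_iact //.
  by move: uv; rewrite -subn_eq0 => /eqP ->; rewrite cats0.
move=> a b; have := etrans (head_g (fun _ => a)) (esym (head_g (fun _ => b))).
by move/eqP; rewrite eqseq_cat // eqxx => /eqP /g_inj [].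
Qed.

Lemma icat_iact_inj u v g h : 1 < d ->
  is_tree_map g -> injective g -> is_tree_map h -> injective h ->
  (forall z, icat u (iact g z) = icat v (iact h z)) -> g = h.
Proof.
move=> d_gt1 tg g_inj th h_inj E.
pose a : 'I_d := Ordinal (ltnW d_gt1); pose b : 'I_d := Ordinal d_gt1.
have ab : a <> b by move/(congr1 val).
have uv : size u = size v.
  case: (ltngtP (size u) (size v)) => [uv|vu|//].
    by case: ab; exact: (icat_iact_shift_trivial tg g_inj E uv).
  by case: ab; exact: (icat_iact_shift_trivial th h_inj (fun z => esym (E z)) vu).
have Euv : u = v by rewrite (icat_prefix (E (fun _ => a))) ?uv // subnn cats0.
apply: (iact_inj tg th) => z; apply: (@icatI _ u).
by rewrite [in RHS]Euv; exact: E.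
Qed.

End TreeMaps.

Section LocalDescriptions.

Variable d : nat.
Implicit Types (f g h : tmap d) (p u v : word d) (y z : iword d) (F : iword d -> iword d).

Definition locally_in (H : tmap d -> Prop) F :=
  forall z, exists p u h z0, [/\ H h, z = icat p z0 &
    forall y, F (icat p y) = icat u (iact h y)].

Lemma locally_in_sub (H H' : tmap d -> Prop) F :
  (forall h, H h -> H' h) -> locally_in H F -> locally_in H' F.
Proof.
move=> HH' locF z; have [p [u [h [z0 [Hh Ez Ep]]]]] := locF z.
by exists p, u, h, z0; split=> //; apply: HH'.
Qed.

Lemma icat_iact_refine F p u h r : is_tree_map h ->
  (forall y, F (icat p y) = icat u (iact h y)) ->
  forall y, F (icat (p ++ r) y) = icat (u ++ h r) (iact (section h r) y).
Proof. by move=> th Ep y; rewrite -icat_cat Ep iact_icat ?icat_cat. Qed.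

Lemma leafset_cover (L : seq (word d)) : leafset L ->
  forall z, exists v y, v \in L /\ z = icat v y.
Proof.
elim=> [|L1 v L2 _ IH] z; first by exists [::], z; rewrite icat0 inE.
have [v' [y [Lv' Ez]]] := IH z.
move: Lv'; rewrite mem_cat inE => /or3P[L1v'|/eqP Ev'|L2v'].
- by exists v', y; rewrite mem_cat L1v'.
- exists (rcons v (y 0)), (fun j => y (j + 1)); split.
    by rewrite !mem_cat (map_f (fun x => rcons v x)) ?mem_enum ?orbT.
  by rewrite Ez Ev' -cats1 -icat_cat -[in LHS](icat_mkseq_shift y 1).
- by exists v', y; rewrite !mem_cat L2v' !orbT.
Qed.

Variable H : tmap d -> Prop.
Hypothesis H_tree_map : forall h, H h -> is_tree_map h.
Hypothesis H_id : H id.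
Hypothesis H_comp : forall f g, H f -> H g -> H (f \o g).
Hypothesis H_section : forall h v, H h -> H (section h v).
Hypothesis H_inv : forall h, H h -> exists h', [/\ H h', cancel h h' & cancel h' h].

Lemma locally_in_leafset F n (U Vs : seq (word d)) (sigma : 'S_n) (gs : 'I_n -> tmap d) :
  leafset Vs -> size Vs = n -> (forall i, H (gs i)) ->
  (forall (i : 'I_n) y,
     F (icat (nth [::] Vs i) y) = icat (nth [::] U (sigma i)) (iact (gs i) y)) ->
  locally_in H F.
Proof.
move=> LVs size_Vs Hgs EF z.
have [v [y [Vs_v Ez]]] := leafset_cover LVs z.
have vn : index v Vs < n by rewrite -size_Vs index_mem.
exists v, (nth [::] U (sigma (Ordinal vn))), (gs (Ordinal vn)), y; split=> //.
by move=> y'; rewrite -EF /= nth_index.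
Qed.

Lemma locally_in_id : locally_in H id.
Proof.
by move=> z; exists [::], [::], id, z; split=> [||y]; rewrite ?icat0 ?iact_id.
Qed.

Lemma locally_in_inv F F' : locally_in H F -> cancel F F' -> cancel F' F ->
  locally_in H F'.
Proof.
move=> locF FK F'K z.
have [p [u [h [z0 [Hh Ez Ep]]]]] := locF (F' z).
have [h' [Hh' hK h'K]] := H_inv Hh.
exists u, p, h', (iact h z0); split=> [||y]; first by [].
  by rewrite -Ep -Ez F'K.
suff -> : icat u y = F (icat p (iact h' y)) by rewrite FK.
rewrite Ep; congr icat; apply: (@iword_eq_mkseq _ _ _ 0) => m _.
by rewrite !mkseq_iact ?h'K //; apply: H_tree_map.
Qed.

Lemma locally_in_comp F F' : locally_in H F -> locally_in H F' -> locally_in H (F \o F').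
Proof.
move=> locF locF' z.
have [p1 [u1 [h1 [z1 [Hh1 Ez E1]]]]] := locF' z.
have [p2 [u2 [h2 [y2 [Hh2 EF'z E2]]]]] := locF (F' z).
have [th1 th2] := (H_tree_map Hh1, H_tree_map Hh2).
pose r := mkseq z1 (size p2); pose z1' := fun j => z1 (j + size p2).
(* Refine the description of F' at z until its output prefix covers p2. *)
have E1r := icat_iact_refine r th1 E1.
have Ez' : z = icat (p1 ++ r) z1' by rewrite Ez -icat_cat icat_mkseq_shift.
have EF'z' : icat (u1 ++ h1 r) (iact (section h1 r) z1') = icat p2 y2.
  by rewrite -E1r -Ez'.
have size_p2 : size p2 <= size (u1 ++ h1 r).
  by have [h1_size _] := th1; rewrite size_cat h1_size size_mkseq leq_addl.
have Eu1 := icat_prefix EF'z' size_p2.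
set q := mkseq y2 _ in Eu1.
exists (p1 ++ r), (u2 ++ h2 q), (section h2 q \o section h1 r), z1'; split=> //.
  by apply: H_comp; apply: H_section.
move=> y /=; rewrite E1r Eu1 -icat_cat E2 iact_icat // icat_cat.
by rewrite iact_comp //; apply: tree_map_section.
Qed.

Lemma locally_in_gen n (s : nat -> iword d -> iword d) F :
  (forall k, k < n -> locally_in H (s k)) -> gen n s F -> locally_in H F.
Proof.
move=> locs; elim=> [|k F' kn _ IH|k F'' F' kn sK F''K _ IH].
- exact: locally_in_id.
- exact: locally_in_comp (locs k kn) IH.
- exact: locally_in_comp (locally_in_inv (locs k kn) sK F''K) IH.
Qed.

Lemma locally_in_persistent f (a : 'I_d) : 1 < d -> is_tree_map f -> injective f ->
  section f [:: a] = f -> locally_in H (iact f) -> H f.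
Proof.
move=> d_gt1 tf f_inj fa /(_ (fun _ => a)) [p [u [h [z0 [Hh Ea Ep]]]]].
have h_inj : injective h by have [h' [_ hK _]] := H_inv Hh; exact: can_inj hK.
suff -> : f = h by [].
apply: (icat_iact_inj (u := f p) (v := u) d_gt1 tf f_inj (H_tree_map Hh) h_inj) => z.
(* p is a power of the persistent letter a, so the section of f at p is f. *)
by rewrite -Ep iact_icat // [in section f p](const_icat_nseq Ea) section_nseq.
Qed.

End LocalDescriptions.

Lemma gen_one (A : Type) n (s : nat -> A -> A) k : k < n -> gen n s (s k).
Proof. by move=> kn; apply: gen_mul kn (gen_id n s). Qed.

Lemma gen_comp (A : Type) n (s : nat -> A -> A) f g :
  gen n s f -> gen n s g -> gen n s (f \o g).
Proof.
elim=> [//|k f' kn _ IH|k h f' kn sK hK _ IH] gen_g.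
  exact: gen_mul kn (IH gen_g).
exact: gen_inv kn sK hK (IH gen_g).
Qed.

Section GeneratedByList.

Variable d : nat.
Variable P : list (tmap d).
Hypothesis P_aut : forall e, List.In e P -> is_aut e.

Let s j := List.nth j P id.
Let N := length P.

Lemma In_gen e : List.In e P -> gen N s e.
Proof. by case/(List.In_nth _ _ id) => k [/ltP kN <-]; apply: gen_one. Qed.

Lemma gen_aut k : k < N -> is_aut (s k).
Proof. by move/ltP=> kN; apply: P_aut; apply: List.nth_In. Qed.

Lemma gen_tree_map e : gen N s e -> is_tree_map e.
Proof.
elim=> [|k f kN _ tf|k h f kN sK hK _ tf]; first by [].
  exact: tree_map_comp (aut_tree_map (gen_aut kN)) tf.
exact: tree_map_comp (tree_map_inv (aut_tree_map (gen_aut kN)) sK hK) tf.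
Qed.

Lemma gen_inverse e : gen N s e -> exists e', [/\ gen N s e', cancel e e' & cancel e' e].
Proof.
elim=> [|k f kN _ [f' [gen_f' fK f'K]]|k h f kN sK hK _ [f' [gen_f' fK f'K]]].
- by exists id; split=> //; apply: gen_id.
- have [[h sK hK] _] := gen_aut kN.
  exists (f' \o h); split=> [||x /=]; last by rewrite f'K hK.
    exact: gen_comp gen_f' (gen_inv kN sK hK (gen_id N s)).
  by move=> x /=; rewrite sK fK.
- exists (f' \o s k); split=> [||x /=]; last by rewrite f'K sK.
    exact: gen_comp gen_f' (gen_one s kN).
  by move=> x /=; rewrite hK fK.
Qed.

Hypothesis P_section : forall e v, List.In e P -> List.In (section e v) P.

Lemma gen_section e v : gen N s e -> gen N s (section e v).
Proof.
move=> gen_e; elim: gen_e v => [|k f kN gen_f IH|k h f kN sK hK gen_f IH] v.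
- by rewrite section_id; apply: gen_id.
- have ts := aut_tree_map (gen_aut kN).
  rewrite (section_comp _ ts (gen_tree_map gen_f)).
  by apply: gen_comp (IH v); apply/In_gen/P_section/List.nth_In/ltP.
- have ts := aut_tree_map (gen_aut kN).
  rewrite (section_comp _ (tree_map_inv ts sK hK) (gen_tree_map gen_f)).
  have [sK' hK'] := section_inv (f v) ts sK hK.
  have sk_P : List.In (s k) P by apply/List.nth_In/ltP.
  have [j [/ltP jN Ej]] := List.In_nth _ _ id (P_section (h (f v)) sk_P).
  by rewrite -Ej in sK' hK'; apply: gen_inv jN sK' hK' (IH v).
Qed.

End GeneratedByList.

Lemma exists_list_forall (A : Type) (I : eqType) (ok : list A -> Prop)
    (Q : I -> list A -> Prop) (r : seq I) :
  ok nil -> (forall L L', ok L -> ok L' -> ok (L ++ L')) ->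
  (forall i L L', List.incl L L' -> Q i L -> Q i L') ->
  (forall i, i \in r -> exists2 L, ok L & Q i L) ->
  exists2 L, ok L & forall i, i \in r -> Q i L.
Proof.
move=> ok0 okD Q_incl; elim: r => [|i r IH] Qr; first by exists nil.
have [L okL QL] := Qr i (mem_head i r).
have [L' okL' QL'] : exists2 L', ok L' & forall j, j \in r -> Q j L'.
  by apply: IH => j jr; apply: Qr; rewrite inE jr orbT.
exists (L ++ L'); first exact: okD.
move=> j; rewrite inE => /predU1P[->|jr].
  exact: Q_incl (List.incl_appl _ (List.incl_refl _)) QL.
exact: Q_incl (List.incl_appr _ (List.incl_refl _)) (QL' j jr).
Qed.

Section FiniteStates.

Variable d : nat.
Implicit Types (G : tmap d -> Prop) (g : tmap d) (L : list (tmap d)).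

Definition self_similar_in G L :=
  (forall e, List.In e L -> G e) /\ (forall e v, List.In e L -> List.In (section e v) L).

Lemma self_similar_in_cat G L L' :
  self_similar_in G L -> self_similar_in G L' -> self_similar_in G (L ++ L').
Proof.
move=> [L_G L_sec] [L'_G L'_sec]; split=> [e|e v] /List.in_app_iff [eL|eL'].
- exact: L_G.
- exact: L'_G.
- by apply/List.in_app_iff; left; apply: L_sec.
- by apply/List.in_app_iff; right; apply: L'_sec.
Qed.

Lemma finite_state_states g : finite_state g ->
  exists2 L, forall e, List.In e L -> exists v, e = section g v
           & forall v, List.In (section g v) L.
Proof.
move=> [n [st g_st]].
have [L L_states L_st] : exists2 L, forall e, List.In e L -> exists v, e = section g v
    & forall k, k \in iota 0 n -> forall v, section g v = st k -> List.In (section g v) L.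
  apply: exists_list_forall => [//|L L' L_st L'_st e|k L L' LL' L_st v /L_st /LL'//|k _].
    by case/List.in_app_iff; [apply: L_st | apply: L'_st].
  (* st k need not be a state of g; if it is not, it is discarded. *)
  case: (classic (exists v, section g v = st k)) => [[v gv]|no_v].
    by exists [:: section g v] => [e [<-|[]]|u gu]; [exists v | left; rewrite gu gv].
  by exists nil => // u gu; case: no_v; exists u.
exists L => // v; have [k [kn gv]] := g_st v.
by apply: (L_st k) => //; [rewrite mem_iota | apply: functional_extensionality].
Qed.

Lemma states_self_similar_in G g : self_similar G -> G g -> finite_state g ->
  exists2 L, self_similar_in G L & List.In g L.
Proof.
move=> G_ss Gg /finite_state_states [L L_states L_sec].
exists L; last by have := L_sec [::]; rewrite section_nil.
split=> [e|e v] /L_states [u ->]; first exact: G_ss.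
by rewrite section_section.
Qed.

Lemma in_V_locally_in G F : self_similar G -> finite_state_group G -> in_V G F ->
  exists2 L, self_similar_in G L & locally_in (fun e => List.In e L) F.
Proof.
move=> G_ss G_fs [n [U [Vs [sigma [gs [_ [LVs [_ [size_Vs [G_gs EF]]]]]]]]]].
have [L ssL gs_L] : exists2 L, self_similar_in G L &
    forall i, i \in enum 'I_n -> List.In (gs i) L.
  apply: exists_list_forall => [|L L'|i L L' LL' /LL'//|i _].
  - by split.
  - exact: self_similar_in_cat.
  - exact: states_self_similar_in G_ss (G_gs i) (G_fs _ (G_gs i)).
exists L => //; apply: (locally_in_leafset LVs size_Vs _ EF) => i.
by apply: gs_L; rewrite mem_enum.
Qed.

Lemma in_V_iact G g : G g -> in_V G (iact g).
Proof.
move=> Gg; exists 1, [:: [::]], [:: [::]], 1%g, (fun _ => g).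
do 4 (split; first by [|apply: leafset_root]).
have nth_leaf k : nth [::] [:: [::]] k = [::] :> word d by case: k => [|[]].
by split=> [_|i z] //; rewrite !nth_leaf !icat0.
Qed.

End FiniteStates.

Theorem lemma5p7 (d : nat) (G : tmap d -> Prop) :
  1 < d ->
  is_subgroup_aut G -> self_similar G -> persistent G -> finite_state_group G ->
  fin_gen (in_V G) -> fin_gen G.
Proof.
move=> d_gt1 [G_aut _] G_ss [a G_pers] G_fs [n [s [s_V s_gen]]].
have [P [P_G P_sec] P_loc] : exists2 P, self_similar_in G P &
    forall k, k \in iota 0 n -> locally_in (fun e => List.In e P) (s k).
  apply: exists_list_forall => [|P P'|k P P' PP'|k].
  - by split.
  - exact: self_similar_in_cat.
  - by apply: locally_in_sub => e /PP'.
  - by rewrite mem_iota => /s_V /in_V_locally_in; apply.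
have P_aut e : List.In e P -> is_aut e by move/P_G/G_aut.
have H_tree_map := gen_tree_map P_aut; have H_inv := gen_inverse P_aut.
exists (length P), (fun j => List.nth j P id); split.
  by move=> k /ltP kP; apply/P_G/List.nth_In.
move=> f Gf; exists f; split=> //.
have [[[f' fK _] tf] fa] := (G_aut f Gf, functional_extensionality _ _ (G_pers f Gf)).
apply: (locally_in_persistent H_tree_map H_inv d_gt1 tf (can_inj fK) fa).
have [F [gen_F EF]] := s_gen _ (in_V_iact Gf).
rewrite -(functional_extensionality _ _ EF).
have H_section := gen_section P_aut P_sec.
apply: (locally_in_gen H_tree_map (gen_id _ _) (@gen_comp _ _ _) H_section H_inv _ gen_F).
move=> k kn; apply: locally_in_sub (P_loc k _); first exact: In_gen.
by rewrite mem_iota.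
Qed.
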